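(* Let $q$ be an acyclic Boolean conjunctive query without self-join, let $F,G\in q$, let $z\in\mathit{vars}(q)$ and let $c$ be a constant. Let $q'=q[z\mapsto c]$, $F'=F[z\mapsto c]$ and $G'=G[z\mapsto c]$. Then: (1) $q'$ is acyclic; (2) if $F'$ attacks $G'$ in the attack graph of $q'$, then $F$ attacks $G$ in the attack graph of $q$; (3) if $F'$ attacks $G'$ in the attack graph of $q'$ and the attack $F\to G$ in the attack graph of $q$ is weak, then the attack $F'\to G'$ is weak.
   Context: Atoms $R(s_1,\dots,s_n)$ have variables or constants as arguments; each relation name has a signature $[n,k]$ with primary key positions $1,\dots,k$. $\mathit{key}(F)$ is the set of variables in the primary-key positions of atom $F$, $\mathit{vars}(F)$ the set of variables of $F$. A Boolean conjunctive query $q$ is a finite set of atoms; $\mathit{vars}(q)$ its variables; it has a self-join if a relation name occurs in two of its atoms. For a query or atom $X$, $X[z\mapsto c]$ denotes the result of replacing every occurrence of variable $z$ by constant $c$. A join tree for $q$ is an undirected tree on the atoms of $q$ such that whenever a variable occurs in atoms $F$ and $G$ it occurs in every atom on the path between them; the edge between $F$ and $G$ is labeled $\mathit{vars}(F)\cap\mathit{vars}(G)$. $q$ is acyclic if it has a join tree. $\mathit{FD}(q)=\{\mathit{key}(F)\to\mathit{vars}(F)\mid F\in q\}$; $F^{+,q}=\{x\in\mathit{vars}(q)\mid \mathit{FD}(q\setminus\{F\})\models\mathit{key}(F)\to x\}$; $F^{\oplus,q}=\{x\in\mathit{vars}(q)\mid \mathit{FD}(q)\models\mathit{key}(F)\to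 x\}$. The attack graph of an acyclic $q$, computed from any join tree $\tau$ (independent of the choice), has an edge (attack) $F\to G$ for distinct atoms iff every label $L$ on the path between $F$ and $G$ in $\tau$ satisfies $L\not\subseteq F^{+,q}$. An attack $F\to G$ is weak if $\mathit{key}(G)\subseteq F^{\oplus,q}$, strong otherwise. *)

From HB Require Import structures.
From mathcomp Require Import all_boot.
From mathcomp Require Import finmap.

Set Implicit Arguments.
Unset Strict Implicit.
Unset Printing Implicit Defensive.

Local Open Scope fset_scope.

(** Variables and constants are both encoded by natural numbers;
    a term is [inl x] (variable x) or [inr c] (constant c). *)
Definition var := nat.
Definition const := nat.
Definition term := (var + const)%type.

Definition atom := (nat * seq term)%type.
Definition rel_name (F : atom) : nat := F.1.
Definition args (F : atom) : seq term := F.2.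

Definition query := {fset atom}.

(** A signature assigns to every relation name a pair [n, k]
    (arity n, primary key positions 1..k). *)
Definition signature := nat -> nat * nat.

Definition term_var (t : term) : option var :=
  if t is inl x then Some x else None.

Definition term_vars (s : seq term) : {fset var} := [fset x in pmap term_var s].

Definition vars (F : atom) : {fset var} := term_vars (args F).
Definition key (sg : signature) (F : atom) : {fset var} :=
  term_vars (take (sg (rel_name F)).2 (args F)).

Definition in_vars_query (q : query) (x : var) : Prop :=
  exists2 F, F \in q & x \in vars F.

Definition well_typed (sg : signature) (q : query) : Prop :=
  forall F, F \in q ->
    size (args F) = (sg (rel_name F)).1 /\ (sg (rel_name F)).2 <= (sg (rel_name F)).1.

Definition no_self_join (q : query) : Prop :=
  forall F G, F \in q -> G \in q -> rel_name F = rel_name G -> F = G.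

Definition subst_term (z : var) (c : const) (t : term) : term :=
  match t with
  | inl x => if x == z then inr c else t
  | inr _ => t
  end.
Definition subst_atom (z : var) (c : const) (F : atom) : atom :=
  (rel_name F, map (subst_term z c) (args F)).
Definition subst_query (z : var) (c : const) (q : query) : query :=
  [fset subst_atom z c F | F in q].

(** Logical implication of FDs:  FD(Q) |= X -> x, where
    FD(Q) = { key(H) -> vars(H) | H in Q }. *)
Inductive fd_closure (sg : signature) (Q : query) (X : {fset var}) : var -> Prop :=
| fdc_base x : x \in X -> fd_closure sg Q X x
| fdc_step H x : H \in Q -> (forall y, y \in key sg H -> fd_closure sg Q X y) ->
    x \in vars H -> fd_closure sg Q X x.

Definition plus_closure (sg : signature) (q : query) (F : atom) (x : var) : Prop :=
  in_vars_query q x /\ fd_closure sg (q `\ F) (key sg F) x.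

Definition oplus_closure (sg : signature) (q : query) (F : atom) (x : var) : Prop :=
  in_vars_query q x /\ fd_closure sg q (key sg F) x.

(** Undirected graphs on atoms are symmetric irreflexive relations [E].
    [upath E F p G]: F :: p is a simple path (no repeated vertex) from F to G. *)
Definition upath (E : rel atom) (F : atom) (p : seq atom) (G : atom) : bool :=
  [&& path E F p, last F p == G & uniq (F :: p)].

Definition is_tree_on (q : query) (E : rel atom) : Prop :=
  [/\ (forall F G, E F G -> F \in q /\ G \in q),
      symmetric E,
      irreflexive E,
      (forall F G, F \in q -> G \in q -> exists p, upath E F p G) &
      (forall F G p1 p2, upath E F p1 G -> upath E F p2 G -> p1 = p2)].

Definition is_join_tree (q : query) (E : rel atom) : Prop :=
  is_tree_on q E /\
  (forall F G p x, F \in q -> G \in q -> upath E F p G ->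
     x \in vars F -> x \in vars G -> forall H, H \in p -> x \in vars H).

Definition acyclic (q : query) : Prop := exists E, is_join_tree q E.

Definition label (A B : atom) : {fset var} := vars A `&` vars B.

(** F attacks G in the attack graph of the acyclic query q: F, G distinct
    atoms of q, and for the join tree (any one; we quantify over all join
    trees, the attack graph being independent of the choice), every label L
    on the path between F and G satisfies L ⊈ F^{+,q}. *)
Definition attacks (sg : signature) (q : query) (F G : atom) : Prop :=
  [/\ acyclic q, F \in q, G \in q, F <> G &
      forall E p, is_join_tree q E -> upath E F p G ->
        forall A B, (A, B) \in zip (F :: p) p ->
          exists2 x, x \in label A B & ~ plus_closure sg q F x].

Definition weak_attack (sg : signature) (q : query) (F G : atom) : Prop :=
  attacks sg q F G /\ (forall x, x \in key sg G -> oplus_closure sg q F x).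

(** Substituting a constant for z maps the atoms of q injectively (there is
    no self-join), leaves every other variable in place, and only deletes
    occurrences of z.  Hence the image of a join tree of q is a join tree of
    q[z->c], and a path of the image lifts to a unique path of the original
    tree.  So a label of q' that is
    not contained in F'^{+,q'} yields a label of q not contained in F^{+,q},
    and key(G) ⊆ F^{⊕,q} gives key(G') ⊆ F'^{⊕,q'}. *)

From HB Require Import structures.
From mathcomp Require Import all_boot.
From mathcomp Require Import finmap.

Set Implicit Arguments.
Unset Strict Implicit.
Unset Printing Implicit Defensive.
Local Open Scope fset_scope.

Lemma mem_term_vars (s : seq term) x : (x \in term_vars s) = (inl x \in s).
Proof.
rewrite /term_vars inE mem_pmap.
by elim: s => [|[y|d] s IH] //=; rewrite !in_cons IH.
Qed.

Lemma eq_subst_term z c t x :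
  (inl x == subst_term z c t) = (x != z) && (inl x == t).
Proof.
case: t => [y|d] /=; last by rewrite andbF.
have [-> | yz] /= := eqVneq y z.
  by rewrite andbC; case: (eqVneq (inl x : term) (inl z)) => // -[->]; rewrite eqxx.
by case: (eqVneq (inl x : term) (inl y)) => [[->] | _]; rewrite ?yz ?andbF.
Qed.

Lemma mem_term_vars_subst z c (s : seq term) x :
  (x \in term_vars (map (subst_term z c) s)) = (x != z) && (x \in term_vars s).
Proof.
rewrite !mem_term_vars; elim: s => [|t s IH]; first by rewrite andbF.
by rewrite /= !in_cons IH eq_subst_term andb_orr.
Qed.

Lemma vars_subst z c A x :
  (x \in vars (subst_atom z c A)) = (x != z) && (x \in vars A).
Proof. exact: mem_term_vars_subst. Qed.

Lemma key_subst sg z c A x :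
  (x \in key sg (subst_atom z c A)) = (x != z) && (x \in key sg A).
Proof. by rewrite /key /= -map_take mem_term_vars_subst. Qed.

Lemma subst_atom_inj (q : query) z c :
  no_self_join q -> {in q &, injective (subst_atom z c)}.
Proof. by move=> nsj A B hA hB /(congr1 fst); apply: nsj. Qed.

Lemma subst_atom_in (q : query) z c A :
  A \in q -> subst_atom z c A \in subst_query z c q.
Proof. by move=> hA; apply/imfsetP; exists A. Qed.

Lemma in_vars_query_subst (q : query) z c x :
  x != z -> in_vars_query q x -> in_vars_query (subst_query z c q) x.
Proof.
move=> xz [H hH hx]; exists (subst_atom z c H); first exact: subst_atom_in.
by rewrite vars_subst xz.
Qed.

Lemma fd_closure_subst sg z c (Q Q' : query) (X X' : {fset var}) x :
  (forall H, H \in Q -> subst_atom z c H \in Q') ->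
  (forall y, y \in X -> y != z -> y \in X') ->
  fd_closure sg Q X x -> x != z -> fd_closure sg Q' X' x.
Proof.
move=> QQ' XX'; elim=> [y /XX' hy /hy | H y hH _ IH hy yz]; first exact: fdc_base.
apply: (@fdc_step _ _ _ (subst_atom z c H)); first exact: QQ'.
- by move=> w; rewrite key_subst => /andP[wz /IH]; apply.
- by rewrite vars_subst yz.
Qed.

Lemma plus_closure_subst sg (q : query) z c F x :
  no_self_join q -> F \in q -> x != z -> plus_closure sg q F x ->
  plus_closure sg (subst_query z c q) (subst_atom z c F) x.
Proof.
move=> nsj hF xz [hx hfd]; split; first exact: in_vars_query_subst.
apply: (fd_closure_subst (c := c)) hfd xz => [H | y].
- rewrite !inE => /andP[HF hH]; rewrite subst_atom_in // andbT.
  by apply: contra HF => /eqP/(subst_atom_inj nsj hH hF)->.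
- by move=> hy yz; rewrite key_subst yz.
Qed.

Lemma oplus_closure_subst sg (q : query) z c F x :
  x != z -> oplus_closure sg q F x ->
  oplus_closure sg (subst_query z c q) (subst_atom z c F) x.
Proof.
move=> xz [hx hfd]; split; first exact: in_vars_query_subst.
apply: (fd_closure_subst (c := c)) hfd xz => [H | y]; first exact: subst_atom_in.
by move=> hy yz; rewrite key_subst yz.
Qed.

Definition image_rel (q : query) (f : atom -> atom) (E : rel atom) : rel atom :=
  fun A' B' => has (fun A => has (fun B => [&& E A B, f A == A' & f B == B']) q) q.

Lemma image_relP (q : query) (f : atom -> atom) (E : rel atom) A' B' :
  reflect (exists A B, [/\ A \in q, B \in q, E A B, f A = A' & f B = B'])
          (image_rel q f E A' B').
Proof.
apply: (iffP hasP) => [[A hA /hasP[B hB /and3P[e /eqP h1 /eqP h2]]]|[A [B [hA hB e h1 h2]]]].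
  by exists A, B.
by exists A => //; apply/hasP; exists B => //; rewrite e h1 h2 !eqxx.
Qed.

Lemma path_all_in (q : query) (E : rel atom) A p :
  (forall A B, E A B -> A \in q /\ B \in q) ->
  A \in q -> path E A p -> all (mem q) (A :: p).
Proof.
move=> E_in; elim: p A => [|B p IH] A hA /=; first by rewrite hA.
by case/andP=> /E_in[_ hB] /(IH _ hB) /= ->; rewrite hA.
Qed.

Lemma upath_notin_nil (q : query) (E : rel atom) A p B :
  (forall A B, E A B -> A \in q /\ B \in q) -> A \notin q -> upath E A p B -> p = [::].
Proof.
move=> Eq; case: p => [//|C p] Aq /and3P[/= /andP[/Eq[hA _] _] _ _].
by rewrite hA in Aq.
Qed.

Lemma mem_zip_map (f : atom -> atom) (s t : seq atom) A B :
  (A, B) \in zip s t -> (f A, f B) \in zip (map f s) (map f t).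
Proof.
elim: s t => [|C s IH] [|D t] //=; rewrite !in_cons => /orP[/eqP[-> ->] | /IH->].
  by rewrite eqxx.
by rewrite orbT.
Qed.

Section ImageGraph.

Variables (q : query) (f : atom -> atom) (E : rel atom).
Hypothesis E_in : forall A B, E A B -> A \in q /\ B \in q.
Hypothesis f_inj : {in q &, injective f}.

Let E' := image_rel q f E.
Let q' := [fset f A | A in q].

Lemma image_rel_in A' B' : E' A' B' -> A' \in q' /\ B' \in q'.
Proof.
by case/image_relP=> A [B [hA hB _ <- <-]]; split; apply/imfsetP; [exists A | exists B].
Qed.

Lemma path_image A p : A \in q -> path E A p -> path E' (f A) (map f p).
Proof.
elim: p A => [|B p IH] A hA //= /andP[e hp]; have [_ hB] := E_in e.
by rewrite IH // andbT; apply/image_relP; exists A, B.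
Qed.

Lemma path_preimage A p' : A \in q -> path E' (f A) p' ->
  exists2 p, p' = map f p & path E A p.
Proof.
elim: p' A => [|B' p' IH] A hA /=; first by exists [::].
case/andP=> /image_relP[A1 [B [hA1 hB e /(f_inj hA1 hA) eA <-]]] /(IH _ hB)[p -> hp].
by exists (B :: p) => //=; rewrite -eA e.
Qed.

Lemma upath_image A p B : A \in q -> upath E A p B -> upath E' (f A) (map f p) (f B).
Proof.
move=> hA /and3P[hp /eqP hl hu]; have /allP all_q := path_all_in E_in hA hp.
rewrite /upath path_image // last_map hl eqxx -map_cons map_inj_in_uniq //.
by move=> C D /all_q hC /all_q hD; apply: f_inj.
Qed.

Lemma upath_preimage A p' B : A \in q -> B \in q -> upath E' (f A) p' (f B) ->
  exists2 p, p' = map f p & upath E A p B.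
Proof.
move=> hA hB /and3P[hp' /eqP hl hu]; have [p ? hp] := path_preimage hA hp'; subst p'.
have /allP all_q := path_all_in E_in hA hp.
have f_inj_p : {in A :: p &, injective f}.
  by move=> C D /all_q hC /all_q hD; apply: f_inj.
rewrite -map_cons (map_inj_in_uniq f_inj_p) in hu.
exists p => //; rewrite /upath hp hu andbT /=.
by rewrite last_map in hl; rewrite (f_inj (all_q _ (mem_last _ _)) hB hl).
Qed.

Lemma tree_on_image : is_tree_on q E -> is_tree_on q' E'.
Proof.
case=> _ Esym Eirr Econn Euniq; split.
- exact: image_rel_in.
- move=> A' B'; apply/idP/idP => /image_relP[A [B [hA hB e <- <-]]];
    by apply/image_relP; exists B, A; rewrite Esym.
- move=> A'; apply/negP => /image_relP[A [B [hA hB e <- /f_inj AB]]].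
  by rewrite -AB // Eirr in e.
- move=> _ _ /imfsetP[A hA ->] /imfsetP[B hB ->].
  by have [p hp] := Econn A B hA hB; exists (map f p); apply: upath_image.
- move=> A' B' p1 p2; have [A'q' | A'q'] := boolP (A' \in q'); last first.
    by move=> /(upath_notin_nil image_rel_in A'q') -> /(upath_notin_nil image_rel_in A'q').
  move=> h1; have B'q' : B' \in q'.
    case/and3P: h1 => hp /eqP <- _.
    by have /allP := path_all_in image_rel_in A'q' hp; apply; apply: mem_last.
  case/imfsetP: A'q' h1 => A hA -> h1; case/imfsetP: B'q' h1 => B hB -> h1.
  move=> h2; have [r1 -> hr1] := upath_preimage hA hB h1.
  by have [r2 -> hr2] := upath_preimage hA hB h2; rewrite (Euniq _ _ _ _ hr1 hr2).
Qed.

End ImageGraph.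

Lemma label_subst z c A B x :
  (x \in label (subst_atom z c A) (subst_atom z c B)) = (x != z) && (x \in label A B).
Proof. by rewrite !in_fsetI !vars_subst andbACA andbb. Qed.

Lemma join_tree_subst (q : query) z c E :
  no_self_join q -> is_join_tree q E ->
  is_join_tree (subst_query z c q) (image_rel q (subst_atom z c) E).
Proof.
move=> nsj [tree rip]; have f_inj := @subst_atom_inj q z c nsj.
have E_in : forall A B, E A B -> A \in q /\ B \in q by case: tree.
split; first exact: tree_on_image.
move=> _ _ p' x /imfsetP[F hF ->] /imfsetP[G hG ->] /(upath_preimage E_in f_inj hF hG).
case=> p -> hp; rewrite !vars_subst => /andP[xz hxF] /andP[_ hxG] _ /mapP[H hH ->].
by rewrite vars_subst xz (rip F G p x hF hG hp hxF hxG H hH).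
Qed.

Lemma acyclic_subst (q : query) z c :
  no_self_join q -> acyclic q -> acyclic (subst_query z c q).
Proof. by move=> nsj [E jt]; exists (image_rel q (subst_atom z c) E); apply: join_tree_subst. Qed.

Lemma attacks_of_subst sg (q : query) F G z c :
  acyclic q -> no_self_join q -> F \in q -> G \in q ->
  attacks sg (subst_query z c q) (subst_atom z c F) (subst_atom z c G) ->
  attacks sg q F G.
Proof.
move=> ac nsj hF hG [_ _ _ FG' att']; have f_inj := @subst_atom_inj q z c nsj.
split=> // [FG | E p jt hp A B hAB]; first by apply: FG'; rewrite FG.
have E_in : forall A B, E A B -> A \in q /\ B \in q by case: jt => -[].
have [x] := att' _ _ (join_tree_subst z c nsj jt) (upath_image E_in f_inj hF hp) _ _
  (mem_zip_map (subst_atom z c) hAB).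
rewrite label_subst => /andP[xz hx] notplus.
by exists x => // /(plus_closure_subst c nsj hF xz).
Qed.

Lemma weak_attack_subst sg (q : query) F G z c :
  attacks sg (subst_query z c q) (subst_atom z c F) (subst_atom z c G) ->
  weak_attack sg q F G ->
  weak_attack sg (subst_query z c q) (subst_atom z c F) (subst_atom z c G).
Proof.
move=> att' [_ keyG]; split=> // x; rewrite key_subst => /andP[xz /keyG].
exact: oplus_closure_subst.
Qed.

Theorem lemma5 (sg : signature) (q : query) (F G : atom) (z : var) (c : const) :
  well_typed sg q -> acyclic q -> no_self_join q ->
  F \in q -> G \in q -> in_vars_query q z ->
  [/\ acyclic (subst_query z c q),
      (attacks sg (subst_query z c q) (subst_atom z c F) (subst_atom z c G) ->
         attacks sg q F G) &
      (attacks sg (subst_query z c q) (subst_atom z c F) (subst_atom z c G) ->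
         weak_attack sg q F G ->
         weak_attack sg (subst_query z c q) (subst_atom z c F) (subst_atom z c G))].
Proof.
move=> _ ac nsj hF hG _; split.
- exact: acyclic_subst.
- exact: attacks_of_subst.
- exact: weak_attack_subst.
Qed.
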